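(* Let $P$ be a poset. (1) $\mathcal{M}(P)$ is a left gcd-monoid if and only if for every $a\in P$ the subset $\{x\in P: x\ge a\}$ is a meet-semilattice (under the induced order). (2) $\mathcal{M}(P)$ is a right gcd-monoid if and only if for every $a\in P$ the subset $\{x\in P:x\le a\}$ is a join-semilattice.
   Context: For a poset $P$, the interval monoid $\mathcal{M}(P)$ is the monoid presented by generators $[x,y]$ for $x\le y$ in $P$ and relations $[x,x]=1$ ($x\in P$) and $[x,z]=[x,y][y,z]$ whenever $x\le y\le z$. In a monoid $M$, $a\leqslant b$ iff $b=ax$ for some $x$, and $a\mathbin{\widetilde\leqslant}b$ iff $b=xa$ for some $x$. $M$ is a left gcd-monoid if it is conical ($xy=1\Rightarrow x=1$), left cancellative, and any two elements have a greatest lower bound w.r.t. $\leqslant$; a right gcd-monoid if it is conical, right cancellative, and any two elements have a greatest lower bound w.r.t. $\mathbin{\widetilde\leqslant}$. *)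

From HB Require Import structures.
From mathcomp Require Import all_boot all_order.
Set Implicit Arguments. Unset Strict Implicit. Unset Printing Implicit Defensive.
Import Order.TTheory.
Local Open Scope order_scope.

(* Generators [x,y] of the interval monoid, for x <= y in P
   (boolean order, so the proof component is irrelevant). *)
Definition ivgen d (P : porderType d) := {p : P * P | p.1 <= p.2}.

Definition ivg d (P : porderType d) (x y : P) (h : x <= y) : ivgen P :=
  exist (fun p : P * P => p.1 <= p.2) (x, y) h.

(* Words over the generators; M(P) is the quotient of the free monoid
   (seq (ivgen P), concatenation, [::]) by the congruence [mcong]
   generated by the defining relations. *)
Inductive mcong d (P : porderType d) : seq (ivgen P) -> seq (ivgen P) -> Prop :=
| mcong_refl w : mcong w w
| mcong_sym u v : mcong u v -> mcong v u
| mcong_trans u v w : mcong u v -> mcong v w -> mcong u w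
| mcong_unit (u v : seq (ivgen P)) (x : P) :
    mcong (u ++ [:: ivg (lexx x)] ++ v) (u ++ v)
| mcong_split (u v : seq (ivgen P)) (x y z : P) (hxy : x <= y) (hyz : y <= z) :
    mcong (u ++ [:: ivg (le_trans hxy hyz)] ++ v)
          (u ++ [:: ivg hxy; ivg hyz] ++ v).

Definition mleft d (P : porderType d) (a b : seq (ivgen P)) : Prop :=
  exists c, mcong b (a ++ c).
Definition mright d (P : porderType d) (a b : seq (ivgen P)) : Prop :=
  exists c, mcong b (c ++ a).

Definition conical d (P : porderType d) : Prop :=
  forall a b : seq (ivgen P), mcong (a ++ b) [::] -> mcong a [::].

Definition left_cancellative d (P : porderType d) : Prop :=
  forall a b c : seq (ivgen P), mcong (a ++ b) (a ++ c) -> mcong b c.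

Definition right_cancellative d (P : porderType d) : Prop :=
  forall a b c : seq (ivgen P), mcong (b ++ a) (c ++ a) -> mcong b c.

Definition left_gcd_monoid d (P : porderType d) : Prop :=
  [/\ conical P, left_cancellative P &
      forall a b : seq (ivgen P), exists g,
        [/\ mleft g a, mleft g b &
            forall h, mleft h a -> mleft h b -> mleft h g]].

Definition right_gcd_monoid d (P : porderType d) : Prop :=
  [/\ conical P, right_cancellative P &
      forall a b : seq (ivgen P), exists g,
        [/\ mright g a, mright g b &
            forall h, mright h a -> mright h b -> mright h g]].

Definition upset_meet_semilattice d (P : porderType d) (a : P) : Prop :=
  forall x y : P, a <= x -> a <= y ->
    exists m : P, [/\ a <= m, m <= x, m <= y &
      forall z : P, a <= z -> z <= x -> z <= y -> z <= m].

Definition downset_join_semilattice d (P : porderType d) (a : P) : Prop :=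
  forall x y : P, x <= a -> y <= a ->
    exists m : P, [/\ m <= a, x <= m, y <= m &
      forall z : P, z <= a -> x <= z -> y <= z -> m <= z].

From mathcomp Require Import all_boot all_order.
Set Implicit Arguments. Unset Strict Implicit. Unset Printing Implicit Defensive.
Import Order.TTheory.
Local Open Scope order_scope.

(* Every element of M(P) has a unique normal form: a word of generators
   [x,y] with x < y in which no two adjacent letters [x,y][y',z] have
   y = y'; it is computed by deleting units and merging composable
   neighbours, which is confluent.  On normal forms left divisibility is
   transparent: the left divisors of [a0,a1][a2,a3]... are its prefixes,
   followed by a shortening [a_2k, z] (z <= a_2k+1) of the next letter.
   So a left gcd is a common prefix followed by [x, m] with m the meet of
   the two next right endpoints in {z | z >= x}; conversely the left gcd
   of [a,x] and [a,y] has to be 1 or [a,m] with m their meet above a.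
   Conicality and left cancellation hold in every interval monoid.
   Part (2) is part (1) for the dual poset: reversing words and swapping
   endpoints is an anti-isomorphism between M(P) and M(P^d). *)

Section IntervalMonoid.
Variables (d : Order.disp_t) (P : porderType d).
Implicit Types (g h : P * P) (w A B D G H W : seq (P * P)).

Definition nf_cons g w :=
  if g.1 == g.2 then w else
  if w is h :: w' then (if g.2 == h.1 then (g.1, h.2) :: w' else g :: w)
  else [:: g].

Definition nf w := foldr nf_cons [::] w.

Fixpoint reduced w :=
  if w is g :: w' then
    [&& g.1 < g.2, (if w' is h :: _ then g.2 != h.1 else true) & reduced w']
  else true.

Lemma reduced_behead g w : reduced (g :: w) -> reduced w.
Proof. by case/and3P. Qed.

Lemma reduced_all_le w : reduced w -> all (fun g => g.1 <= g.2) w.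
Proof. by elim: w => [|g w IH] //= /and3P [/ltW -> _ /IH]. Qed.

Lemma nf_cons_reduced g w : g.1 <= g.2 -> reduced w -> reduced (nf_cons g w).
Proof.
move=> le_g rw; rewrite /nf_cons; case: eqVneq => [//|ng].
have lt_g : g.1 < g.2 by rewrite lt_neqAle ng.
case: w rw => [|h w] /=; first by rewrite lt_g.
case/and3P=> lt_h ah rw; case: eqVneq => [e|ne] /=.
  by rewrite (lt_trans lt_g) ?e // rw andbT; case: (w) ah.
by rewrite lt_g ne lt_h ah rw.
Qed.

Lemma foldr_nf_cons_reduced A w :
  all (fun g => g.1 <= g.2) A -> reduced w -> reduced (foldr nf_cons w A).
Proof.
by elim: A => [//|g A IH] /= /andP [le_g le_A] rw; apply/nf_cons_reduced/IH.
Qed.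

Lemma nf_cons_id g w : reduced (g :: w) -> nf_cons g w = g :: w.
Proof.
case/and3P=> lt_g ag _; rewrite /nf_cons (lt_eqF lt_g).
by case: w ag => [|h w] //= /negbTE ->.
Qed.

Lemma foldr_nf_cons_id D w : reduced (D ++ w) -> foldr nf_cons w D = D ++ w.
Proof.
elim: D => [//|g D IH] /= rDw.
by rewrite IH ?(reduced_behead rDw) // nf_cons_id.
Qed.

Lemma nf_id w : reduced w -> nf w = w.
Proof. by move=> rw; rewrite /nf -{2}(cats0 w) foldr_nf_cons_id cats0. Qed.

Lemma nf_cat A w : nf (A ++ w) = foldr nf_cons (nf w) A.
Proof. by rewrite /nf foldr_cat. Qed.

Lemma nf_cons_split (x y z : P) w : x <= y -> y <= z ->
  nf_cons (x, z) w = nf_cons (x, y) (nf_cons (y, z) w).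
Proof.
move=> le_xy le_yz; rewrite /nf_cons /=.
case: (x =P y) => [<-|ne_xy]; first by case: eqP.
case: (y =P z) => [<-|ne_yz]; first by rewrite (introF eqP ne_xy).
have -> : (x == z) = false.
  by apply/eqP => e_xz; apply: ne_xy; apply/le_anti; rewrite le_xy e_xz.
by case: w => [|h w] /=; rewrite ?eqxx //; case: (z == h.1); rewrite /= ?eqxx.
Qed.

(* On normal forms, the only merge nf_cons g can perform is with a letter
   starting at g.2, which can therefore be recovered. *)
Definition nf_uncons g w :=
  if w is h :: w' then (if h == g then w' else (g.2, h.2) :: w') else [::].

Lemma nf_consK g w : g.1 < g.2 -> reduced w -> nf_uncons g (nf_cons g w) = w.
Proof.
case: g => g1 g2 /= lt_g; rewrite /nf_cons /= (lt_eqF lt_g).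
case: w => [|[h1 h2] w] /=; first by rewrite eqxx.
case/and3P=> lt_h _ _; case: eqVneq => [e|_] /=; last by rewrite eqxx.
by rewrite xpair_eqE eqxx e (gt_eqF lt_h).
Qed.

Lemma nf_cons_neq_nil g w : g.1 < g.2 -> nf_cons g w != [::].
Proof. by rewrite /nf_cons => /lt_eqF ->; case: w => // h w; case: ifP. Qed.

Lemma foldr_nf_cons_inj A w1 w2 : reduced A -> reduced w1 -> reduced w2 ->
  foldr nf_cons w1 A = foldr nf_cons w2 A -> w1 = w2.
Proof.
move=> + r1 r2; elim: A => [//|g A IH] /= /and3P [lt_g _ rA] e.
have rfold w : reduced w -> reduced (foldr nf_cons w A).
  by move=> rw; apply: foldr_nf_cons_reduced (reduced_all_le rA) rw.
apply: IH rA _; by rewrite -(nf_consK lt_g (rfold _ r1)) e nf_consK ?rfold.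
Qed.

Fixpoint nf_ldiv H A : Prop :=
  match H, A with
  | [::], _ => True
  | h :: H', a :: A' =>
      if H' is [::] then h.1 = a.1 /\ h.2 <= a.2 else h = a /\ nf_ldiv H' A'
  | _ :: _, [::] => False
  end.

Lemma nf_ldiv_nil H : nf_ldiv H [::] -> H = [::].
Proof. by case: H. Qed.

Lemma nf_ldiv_head h H A :
  nf_ldiv (h :: H) A -> exists a A', A = a :: A' /\ h.1 = a.1.
Proof.
by case: A => [|a A] //; case: H => [|h' H] /= [e _]; exists a, A; rewrite e.
Qed.

Lemma nf_ldiv_foldr D w :
  reduced D -> reduced w -> nf_ldiv D (foldr nf_cons w D).
Proof.
move=> + rw; elim: D => [//|h D IH] /and3P [lt_h ah rD].
case: D ah rD IH => [|h' D] ah rD IH.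
  rewrite /= /nf_cons (lt_eqF lt_h); case: w rw {IH} => [|c w] /=; first by [].
  by case/and3P=> lt_c _ _; case: eqP => [->|_] /=; split=> //; apply: ltW.
have [x [X [eX ex]]] := nf_ldiv_head (IH rD); move: (IH rD).
have rX : reduced (x :: X).
  by rewrite -eX; apply: foldr_nf_cons_reduced (@reduced_all_le (h' :: D) rD) rw.
have -> : foldr nf_cons w [:: h, h' & D] = nf_cons h (x :: X) by rewrite -eX.
rewrite eX nf_cons_id; first by split.
by apply/and3P; split; rewrite // -ex.
Qed.

Lemma nf_ldivP D A : reduced D -> reduced A -> nf_ldiv D A ->
  exists2 w, reduced w & A = foldr nf_cons w D.
Proof.
elim: D A => [|h D IH] A; first by exists A.
case/and3P=> lt_h _ rD; case: A => [//|a A] raA; have /and3P [_ aa rA] := raA.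
case: D IH rD => [|h' D] IH rD; last first.
  case=> -> /(IH _ rD rA) [w rw eA]; exists w => //.
  have -> : foldr nf_cons w [:: a, h' & D] = nf_cons a A by rewrite eA.
  by rewrite nf_cons_id.
case=> e1 le2; case: (eqVneq h.2 a.2) => [e2|ne2].
  have eh : h = a by apply: injective_projections.
  by exists A => //; rewrite /= eh nf_cons_id.
exists ((h.2, a.2) :: A); first by apply/and3P; split; rewrite //= lt_neqAle ne2.
by rewrite /= /nf_cons (lt_eqF lt_h) /= eqxx e1; case: (a).
Qed.

Lemma nf_ldiv_diverge a b A B h H : a != b ->
  nf_ldiv (h :: H) (a :: A) -> nf_ldiv (h :: H) (b :: B) ->
  [/\ H = [::], h.1 = a.1, h.1 = b.1, h.2 <= a.2 & h.2 <= b.2].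
Proof.
case: H => [|h' H] /= nab; first by move=> [? ?] [? ?].
by move=> [-> _] [e _]; rewrite e eqxx in nab.
Qed.

Section Gcd.

Hypothesis meetP : forall a : P, upset_meet_semilattice a.

Definition nf_gcd_spec A B G :=
  [/\ reduced G, nf_ldiv G A, nf_ldiv G B &
      forall H, reduced H -> nf_ldiv H A -> nf_ldiv H B -> nf_ldiv H G].

Lemma nf_gcd_diverge a b A B : a != b ->
  reduced (a :: A) -> reduced (b :: B) ->
  exists G, nf_gcd_spec (a :: A) (b :: B) G.
Proof.
move=> nab /and3P [lt_a _ _] /and3P [lt_b _ _].
case: (eqVneq a.1 b.1) => [e1|n1]; last first.
  exists [::]; split=> // -[//|h H] _ dA dB.
  by have [_ ea eb _ _] := nf_ldiv_diverge nab dA dB; rewrite -ea -eb eqxx in n1.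
have le_ab : a.1 <= b.2 by rewrite e1 ltW.
have [m [le_am le_ma le_mb m_max]] := meetP (ltW lt_a) le_ab.
case: (eqVneq m a.1) => [ema|nma].
  exists [::]; split=> // -[//|h H] /and3P [lt_h _ _] dA dB.
  have [_ ea eb le_ha le_hb] := nf_ldiv_diverge nab dA dB.
  have le_ah : a.1 <= h.2 by rewrite -ea ltW.
  have := m_max h.2 le_ah le_ha le_hb.
  by rewrite ema -ea lt_geF.
exists [:: (a.1, m)]; split=> //; first by rewrite /= lt_neqAle eq_sym nma le_am.
move=> [//|h H] /and3P [lt_h _ _] dA dB.
have [-> ea eb le_ha le_hb] := nf_ldiv_diverge nab dA dB.
by split=> //; apply: m_max; rewrite // -ea ltW.
Qed.

Lemma nf_gcd A B : reduced A -> reduced B -> exists G, nf_gcd_spec A B G.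
Proof.
elim: A B => [|a A IH] B rA rB.
  by exists [::]; split=> // H _ /nf_ldiv_nil ->.
case: B rB => [|b B] rB.
  by exists [::]; split=> // H _ _ /nf_ldiv_nil ->.
case: (eqVneq a b) => [eab|nab]; last exact: nf_gcd_diverge.
rewrite -{b}eab in rB *; have /and3P [lt_a aa rA'] := rA.
have [G [rG dA dB G_max]] := IH B rA' (reduced_behead rB).
exists (a :: G); split.
- rewrite /= lt_a rG andbT.
  case: G dA {dB G_max rG} => [//|g G] /nf_ldiv_head [a' [A' [eA ->]]].
  by rewrite eA in aa.
- by case: G dA {dB G_max rG}.
- by case: G dB {dA G_max rG}.
case=> [//|h [|h' H]] rhH //= [-> dA'] [_ dB'].
by split=> //; apply: G_max (reduced_behead rhH) dA' dB'.
Qed.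

End Gcd.

Implicit Types (u v : seq (ivgen P)).

Definition mnf u := nf (map val u).

Lemma mnf_reduced u : reduced (mnf u).
Proof.
by apply: foldr_nf_cons_reduced => //; rewrite all_map; apply/allP => -[].
Qed.

Lemma map_val_onto W :
  all (fun g => g.1 <= g.2) W -> exists u, map val u = W.
Proof.
elim: W => [|g W IH] /=; first by exists [::].
by case/andP=> le_g /IH [u eu]; exists (exist _ g le_g :: u); rewrite /= eu.
Qed.

Lemma mnf_onto W : reduced W -> exists u, mnf u = W.
Proof.
move=> rW; have [u eu] := map_val_onto (reduced_all_le rW).
by exists u; rewrite /mnf eu nf_id.
Qed.

Lemma mcong_ctx u v u1 u2 : mcong u v -> mcong (u1 ++ u ++ u2) (u1 ++ v ++ u2).
Proof.
elim=> {u v} [w | u v _ IH | u v w _ IHuv _ IHvw | u v x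
             | u v x y z le_xy le_yz].
- exact: mcong_refl.
- exact: mcong_sym.
- exact: mcong_trans IHuv IHvw.
- by have := mcong_unit (u1 ++ u) (v ++ u2) x; rewrite !catA.
- by have := mcong_split (u1 ++ u) (v ++ u2) le_xy le_yz; rewrite !catA.
Qed.

Lemma mcong_nil_catr u v : mcong (u ++ v) [::] -> mcong u [::] -> mcong v [::].
Proof. by move=> cuv /mcong_sym/(mcong_ctx [::] v)/mcong_trans; apply. Qed.

Lemma mcong_mnf u v : mcong u v -> mnf u = mnf v.
Proof.
rewrite /mnf.
elim=> {u v} // [u v w _ -> _ -> // | u v x | u v x y z le_xy le_yz].
  by rewrite !map_cat !nf_cat /= /nf_cons eqxx.
by rewrite !map_cat !nf_cat /= -nf_cons_split.
Qed.

Lemma mcong_nf_cons (g : ivgen P) u :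
  exists v, mcong (g :: u) v /\ map val v = nf_cons (val g) (map val u).
Proof.
case: g => [[x y] le_xy]; rewrite /nf_cons /=.
case: (x =P y) => [exy|nxy].
  subst y; exists u; split=> //.
  by rewrite (eq_irrelevance le_xy (lexx x)); apply: (mcong_unit [::] u x).
case: u => [|[[y' z] le_yz] u] /=.
  by exists [:: exist _ (x, y) le_xy]; split=> //; apply: mcong_refl.
case: (y =P y') => [eyy|nyy].
  subst y'; exists (ivg (le_trans le_xy le_yz) :: u); split=> //.
  exact/mcong_sym/(mcong_split [::] u le_xy le_yz).
by exists [:: exist _ (x, y) le_xy, exist _ (y', z) le_yz & u]; split=> //;
  apply: mcong_refl.
Qed.

Lemma mcong_mnf_word u : exists v, mcong u v /\ map val v = mnf u.
Proof.
elim: u => [|g u [v [cuv ev]]].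
  by exists [::]; split=> //; apply: mcong_refl.
have [w [cgw ew]] := mcong_nf_cons g v.
exists w; split; last by rewrite ew ev.
by apply: mcong_trans cgw; have := mcong_ctx [:: g] [::] cuv; rewrite !cats0.
Qed.

Lemma mcong_mnfE u v : mcong u v <-> mnf u = mnf v.
Proof.
split=> [|e]; first exact: mcong_mnf.
have [u' [cu eu]] := mcong_mnf_word u; have [v' [cv ev]] := mcong_mnf_word v.
have eu'v' : u' = v' by apply: (inj_map val_inj); rewrite eu ev.
by rewrite eu'v' in cu; apply: mcong_trans cu (mcong_sym cv).
Qed.

Lemma mnf_cat u v : mnf (u ++ v) = foldr nf_cons (mnf v) (mnf u).
Proof.
have [u' [cu eu]] := mcong_mnf_word u; have [v' [cv ev]] := mcong_mnf_word v.
have cuv : mcong (u ++ v) (u' ++ v').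
  apply: mcong_trans (mcong_ctx [::] v cu) _.
  by have := mcong_ctx u' [::] cv; rewrite !cats0.
rewrite (mcong_mnf cuv) {1}/mnf map_cat eu ev nf_cat nf_id //.
exact: mnf_reduced.
Qed.

Lemma mleftE u v : mleft u v <-> nf_ldiv (mnf u) (mnf v).
Proof.
split=> [[w /mcong_mnf ->]|].
  by rewrite mnf_cat; apply: nf_ldiv_foldr; apply: mnf_reduced.
case/nf_ldivP; rewrite ?mnf_reduced // => W /mnf_onto [w <-] ev.
by exists w; apply/mcong_mnfE; rewrite mnf_cat.
Qed.

Lemma interval_monoid_conical : conical P.
Proof.
move=> u v /mcong_mnfE; rewrite mnf_cat => e; apply/mcong_mnfE; move: e.
have := mnf_reduced u; case: (mnf u) => [//|g U] /and3P [lt_g _ _] /=.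
by move/eqP; rewrite (negbTE (nf_cons_neq_nil _ lt_g)).
Qed.

Lemma interval_monoid_left_cancellative : left_cancellative P.
Proof.
move=> u v w /mcong_mnfE; rewrite !mnf_cat => e; apply/mcong_mnfE.
by apply: foldr_nf_cons_inj e; apply: mnf_reduced.
Qed.

Lemma reduced1 (x y : P) : x < y -> reduced [:: (x, y)].
Proof. by rewrite /= andbT. Qed.

Lemma nf_ldiv1 G (a x : P) :
  nf_ldiv G [:: (a, x)] -> G = [::] \/ exists2 m, G = [:: (a, m)] & m <= x.
Proof.
case: G => [|[g1 g2] [|g' G]] /=; [by left | | by case].
by case=> -> le_x; right; exists g2.
Qed.

Lemma upset_meet_semilattice_of_gcd :
  left_gcd_monoid P -> forall a : P, upset_meet_semilattice a.
Proof.
case=> _ _ gcdP a x y; rewrite le_eqVlt => /predU1P [<-|lt_ax].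
  by exists a; split.
rewrite le_eqVlt => /predU1P [<-|lt_ay].
  by exists a; split=> //; exact: ltW.
have [u eu] := mnf_onto (reduced1 lt_ax).
have [v ev] := mnf_onto (reduced1 lt_ay).
have [le_ax le_ay] := (ltW lt_ax, ltW lt_ay).
have [g [/mleftE gu /mleftE gv g_max]] := gcdP u v.
have below_g z : a < z -> z <= x -> z <= y -> nf_ldiv [:: (a, z)] (mnf g).
  move=> lt_az le_zx le_zy; have [w ew] := mnf_onto (reduced1 lt_az).
  by rewrite -ew; apply/mleftE/g_max; apply/mleftE; rewrite ew ?eu ?ev.
have upset_le m z : a <= z -> (a < z -> z <= m) -> a <= m -> z <= m.
  by move=> + le_m; rewrite le_eqVlt => /predU1P [<-|/le_m].
rewrite eu in gu; rewrite ev in gv.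
case/nf_ldiv1: gu gv => [eg _|[m eg le_mx]].
  exists a; split=> // z le_az le_zx le_zy; apply: upset_le => // lt_az.
  by have := below_g z lt_az le_zx le_zy; rewrite eg.
have lt_am : a < m by move: (mnf_reduced g); rewrite eg /= andbT.
rewrite eg => -[_ le_my]; exists m; split=> //; first exact: ltW.
move=> z le_az le_zx le_zy; apply: upset_le (ltW lt_am) => // lt_az.
by have := below_g z lt_az le_zx le_zy; rewrite eg => -[].
Qed.

Lemma left_gcd_monoid_of_upset_meet :
  (forall a : P, upset_meet_semilattice a) -> left_gcd_monoid P.
Proof.
move=> meetP; split=> [||u v]; first exact: interval_monoid_conical.
  exact: interval_monoid_left_cancellative.
have [G [rG du dv G_max]] := nf_gcd meetP (mnf_reduced u) (mnf_reduced v).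
have [g eg] := mnf_onto rG.
exists g; split=> [||h /mleftE hu /mleftE hv]; apply/mleftE; rewrite eg //.
exact: G_max (mnf_reduced h) hu hv.
Qed.

Lemma left_gcd_monoidE :
  left_gcd_monoid P <-> forall a : P, upset_meet_semilattice a.
Proof.
split; first exact: upset_meet_semilattice_of_gcd.
exact: left_gcd_monoid_of_upset_meet.
Qed.

End IntervalMonoid.

Section FlipWord.
Variables (d1 d2 : Order.disp_t) (P : porderType d1) (Q : porderType d2).
Variables (t : P -> Q) (t_anti : {homo t : x y /~ x <= y}).
Implicit Types (u v : seq (ivgen P)).

Definition flip_gen (g : ivgen P) : ivgen Q :=
  exist (fun p : Q * Q => p.1 <= p.2) (t (val g).2, t (val g).1)
    (t_anti (valP g)).

Definition flip_word u : seq (ivgen Q) := rev (map flip_gen u).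

Lemma flip_word_cat u v : flip_word (u ++ v) = flip_word v ++ flip_word u.
Proof. by rewrite /flip_word map_cat rev_cat. Qed.

Lemma mcong_flip_word u v : mcong u v -> mcong (flip_word u) (flip_word v).
Proof.
elim=> {u v} [w | u v _ IH | u v w _ IHuv _ IHvw | u v x
             | u v x y z le_xy le_yz].
- exact: mcong_refl.
- exact: mcong_sym.
- exact: mcong_trans IHuv IHvw.
- rewrite !flip_word_cat -catA.
  have -> : flip_word [:: ivg (lexx x)] = [:: ivg (lexx (t x))].
    by congr [:: _]; apply: val_inj.
  exact: mcong_unit.
- rewrite !flip_word_cat -!catA.
  have [le_tzy le_tyx] : t z <= t y /\ t y <= t x by split; apply: t_anti.
  have -> : flip_word [:: ivg (le_trans le_xy le_yz)] =
            [:: ivg (le_trans le_tzy le_tyx)] by congr [:: _]; apply: val_inj.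
  have -> : flip_word [:: ivg le_xy; ivg le_yz] = [:: ivg le_tzy; ivg le_tyx].
    by congr [:: _; _]; apply: val_inj.
  exact: mcong_split.
Qed.

End FlipWord.

Lemma flip_wordK d1 d2 (P : porderType d1) (Q : porderType d2)
    (t : P -> Q) (t' : Q -> P) (t_anti : {homo t : x y /~ x <= y})
    (t'_anti : {homo t' : x y /~ x <= y}) :
  cancel t t' -> cancel (flip_word t_anti) (flip_word t'_anti).
Proof.
move=> tK u; rewrite /flip_word map_rev revK -map_comp -[RHS]map_id.
by apply: eq_map => -[[x y] le_xy]; apply: val_inj; rewrite /= !tK.
Qed.

Section AntiIsomorphism.
Variables (d1 d2 : Order.disp_t) (P : porderType d1) (Q : porderType d2).
Variables (F : seq (ivgen P) -> seq (ivgen Q))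
          (G : seq (ivgen Q) -> seq (ivgen P)).
Hypotheses (FK : cancel F G) (GK : cancel G F).
Hypothesis F_cat : forall u v, F (u ++ v) = F v ++ F u.
Hypotheses (F_mcong : forall u v, mcong u v -> mcong (F u) (F v))
           (G_mcong : forall u v, mcong u v -> mcong (G u) (G v)).

Lemma G_cat u v : G (u ++ v) = G v ++ G u.
Proof. by apply: (can_inj FK); rewrite F_cat !GK. Qed.

Lemma F_nil : F [::] = [::].
Proof.
have := congr1 size (F_cat [::] [::]); rewrite size_cat => /eqP.
by rewrite -[X in X == _]addn0 eqn_add2l eq_sym size_eq0 => /eqP.
Qed.

Lemma G_nil : G [::] = [::].
Proof. by rewrite -F_nil FK. Qed.

Lemma mcong_FE u v : mcong (F u) (F v) <-> mcong u v.
Proof. by split=> [/G_mcong|/F_mcong //]; rewrite !FK. Qed.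

Lemma mleft_FE u v : mleft (F u) (F v) <-> mright u v.
Proof.
split=> -[w cw]; last by exists (F w); rewrite -F_cat; apply: F_mcong.
by exists (G w); apply/mcong_FE; rewrite F_cat GK.
Qed.

Lemma conical_anti : conical P <-> conical Q.
Proof.
split=> conic u v.
  move/G_mcong; rewrite G_cat G_nil => cvu.
  rewrite -[u]GK -F_nil; apply/mcong_FE.
  exact: mcong_nil_catr cvu (conic _ _ cvu).
move/F_mcong; rewrite F_cat F_nil => cvu; apply/mcong_FE.
by rewrite F_nil; apply: mcong_nil_catr cvu (conic _ _ cvu).
Qed.

Lemma cancellative_anti : right_cancellative P <-> left_cancellative Q.
Proof.
split=> canc u v w.
  by move/G_mcong; rewrite !G_cat => /canc /F_mcong; rewrite !GK.
by move/F_mcong; rewrite !F_cat => /canc /G_mcong; rewrite !FK.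
Qed.

Lemma right_gcd_monoid_anti : right_gcd_monoid P <-> left_gcd_monoid Q.
Proof.
split=> -[conic canc gcdP]; split=> [||u v]; try exact/conical_anti.
- exact/cancellative_anti.
- have [g [gu gv g_max]] := gcdP (G u) (G v).
  exists (F g); split=> [||h]; first by rewrite -[u]GK; apply/mleft_FE.
    by rewrite -[v]GK; apply/mleft_FE.
  rewrite -[h]GK -[u]GK -[v]GK => /mleft_FE hu /mleft_FE hv.
  exact/mleft_FE/g_max.
- exact/cancellative_anti.
have [g [gu gv g_max]] := gcdP (F u) (F v).
exists (G g); split; try by apply/mleft_FE; rewrite GK.
move=> h /mleft_FE hu /mleft_FE hv; apply/mleft_FE; rewrite GK.
exact: g_max.
Qed.

End AntiIsomorphism.

Lemma to_dual_anti d (P : porderType d) :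
  {homo (id : P -> P^d) : x y /~ x <= y}.
Proof. by []. Qed.

Lemma from_dual_anti d (P : porderType d) :
  {homo (id : P^d -> P) : x y /~ x <= y}.
Proof. by []. Qed.

Theorem proposition7p8 (d : Order.disp_t) (P : porderType d) :
  (left_gcd_monoid P <-> forall a : P, upset_meet_semilattice a) /\
  (right_gcd_monoid P <-> forall a : P, downset_join_semilattice a).
Proof.
split; first exact: left_gcd_monoidE.
pose F := flip_word (@to_dual_anti d P).
pose G := flip_word (@from_dual_anti d P).
have FK : cancel F G by apply: flip_wordK.
have GK : cancel G F by apply: flip_wordK.
have anti := right_gcd_monoid_anti FK GK (flip_word_cat _)
  (mcong_flip_word _) (mcong_flip_word _).
by apply: iff_trans anti (left_gcd_monoidE P^d).
Qed.
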